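(* Let $i,m\ge1$, let $u,v$ be strictly increasing words with letters in $[(i-1)m+1,im]$ of respective lengths $r\le s$, and let $w,w'$ be strictly increasing words with letters in $[(i-1)m]$. Then for every $k\ge2$, row-inserting (letter by letter, left to right) the word $w'v^{(k)}$ into the one-row tableau whose row is $wu^{(k)}$ yields a tableau with exactly two rows, whose first row is $x\,(v+m)^{(k-1)}$ and whose second row is $x'\,(u+m)^{(k-1)}$ for some increasing words $x,x'$ with letters in $[im]$ (possibly of different lengths).
   Context: For a word $y=y_1\cdots y_n$, $y+m=(y_1+m)\cdots(y_n+m)$, and $y^{(k)}=y\,(y+m)\,(y+2m)\cdots(y+(k-1)m)$ (concatenation, with the given $m$). Juxtaposition of words denotes concatenation. Row insertion is Schensted row insertion. *)

(* Words are seq nat; letters are positive integers. *)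
From mathcomp Require Import all_boot.
Set Implicit Arguments. Unset Strict Implicit. Unset Printing Implicit Defensive.

Definition shiftw (m : nat) (y : seq nat) : seq nat := map (fun a => a + m) y.

(* y^(k) = y (y+m) (y+2m) ... (y+(k-1)m) *)
Definition powk (m k : nat) (y : seq nat) : seq nat :=
  flatten [seq shiftw (j * m) y | j <- iota 0 k].

Definition letters_in (a b : nat) (y : seq nat) : bool :=
  all (fun c => (a <= c) && (c <= b)) y.

Fixpoint row_ins (x : nat) (r : seq nat) : option nat * seq nat :=
  match r with
  | [::] => (None, [:: x])
  | y :: r' => if x < y then (Some y, x :: r')
               else let: (b, r'') := row_ins x r' in (b, y :: r'')
  end.

(* Schensted row insertion into a tableau given as its list of rows
   (first row first). *)
Fixpoint tab_ins (x : nat) (T : seq (seq nat)) : seq (seq nat) :=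
  match T with
  | [::] => [:: [:: x]]
  | r :: T' => let: (b, r') := row_ins x r in
               match b with
               | None => r' :: T'
               | Some y => r' :: tab_ins y T'
               end
  end.

Definition word_ins (T : seq (seq nat)) (w : seq nat) : seq (seq nat) :=
  foldl (fun T a => tab_ins a T) T w.

From mathcomp Require Import all_boot.
From mathcomp Require Import zify.
Set Implicit Arguments. Unset Strict Implicit. Unset Printing Implicit Defensive.

(* Write [L = (i-1)m] and [H = im = L + m], and let [R = w u^(k)] be the
   initial row.  The inserted word splits as [X W] with [X = w' v], whose
   letters are [<= H], and [W = (v+m)^(k-1)], whose letters are [> H].

   1. Inserting a weakly increasing word into a weakly increasing row [S]
      whose second row lies below [S] is computed explicitly
      ([word_ins_two_rows]): the letters of the word interleave with an
      initial part of [S], and the bumped letters are appended, in order, to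
      the second row.
   2. Inserting [X] into [R] therefore yields two rows: the first is a front
      part with letters [<= H] followed by the unreached rest of [R], the
      second consists of the bumped letters.
   3. Counting letters of [R], the rest of [R] is dominated entrywise by [W]
      and is not longer ([rest_dominated]); hence each letter of [W] bumps the
      first remaining letter of [R]: the first row becomes (front part) [W]
      and the whole rest of [R] moves to the second row.
   4. The letters above [H] of the second row are then exactly the letters of
      [R] above [H], namely [(u+m)^(k-1)], which gives the theorem. *)

Lemma sorted_leq_cat (s1 s2 : seq nat) :
  sorted leq (s1 ++ s2) = [&& allrel leq s1 s2, sorted leq s1 & sorted leq s2].
Proof. by rewrite !(sorted_pairwise leq_trans) pairwise_cat. Qed.

Lemma sorted_split (a : nat) (S : seq nat) : sorted leq S ->
  S = filter (fun y => y <= a) S ++ filter (fun y => a < y) S.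
Proof.
elim: S => [//|y S IH] /= HyS.
have [HS Hy] := (path_sorted HyS, order_path_min leq_trans HyS).
case: (leqP y a) => Hya /=; first by rewrite -IH.
have Hgt : {in S, forall z, a < z} by move=> z /(allP Hy) /=; lia.
rewrite (@eq_in_filter _ _ pred0) ?filter_pred0; last by move=> z /Hgt /= /ltn_geF.
by rewrite (@eq_in_filter _ _ predT) ?filter_predT // => z /Hgt.
Qed.

Lemma row_ins_mem (x : nat) (r : seq nat) (z : nat) :
  z \in (row_ins x r).2 -> (z == x) || (z \in r).
Proof.
elim: r => [|y r IH] /=; first by rewrite !inE orbF.
case: ifP => _ /=; first by rewrite !inE => /orP[] ->; rewrite ?orTb ?orbT.
case: (row_ins x r) IH => b r'' /= IH.
by rewrite !inE => /orP[|/IH/orP[]] ->; rewrite ?orTb ?orbT.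
Qed.

Lemma row_ins_bump (x : nat) (r : seq nat) (b : nat) :
  (row_ins x r).1 = Some b -> b \in r.
Proof.
elim: r => [|y r IH] //=.
case: ifP => _; first by case=> ->; rewrite inE eqxx.
case: (row_ins x r) IH => b' r'' /= IH /IH Hb; by rewrite inE Hb orbT.
Qed.

Lemma row_ins_sorted (x : nat) (r : seq nat) :
  sorted leq r -> sorted leq (row_ins x r).2.
Proof.
elim: r => [//|y r IH] Hyr /=.
have [Hr Hy] := (path_sorted Hyr, order_path_min leq_trans Hyr).
case: ifP => Hxy.
  by case: r Hyr {IH Hr Hy} => [//|z r] /= /andP[/(leq_trans (ltnW Hxy)) -> ->].
have := IH Hr; case E: (row_ins x r) => [b r''] /= Hr''.
rewrite path_sortedE ?Hr'' ?andbT; last exact: leq_trans.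
apply/allP=> z Hz; have /row_ins_mem : z \in (row_ins x r).2 by rewrite E.
by case/orP=> [/eqP->|/(allP Hy)//]; rewrite leqNgt Hxy.
Qed.

Lemma tab_ins_all (P : pred nat) (x : nat) (T : seq (seq nat)) :
  P x -> all (all P) T -> all (all P) (tab_ins x T).
Proof.
elim: T x => [|r T IH] x Px /=; first by rewrite Px.
case/andP=> Hr HT.
have Hr' : all P (row_ins x r).2.
  by apply/allP=> z /row_ins_mem /orP[/eqP->//|/(allP Hr)].
have Hb := @row_ins_bump x r.
case: (row_ins x r) Hr' Hb => [[b|] r'] /= -> Hb //=.
by apply: IH => //; apply: (allP Hr); apply: Hb.
Qed.

Lemma tab_ins_sorted (x : nat) (T : seq (seq nat)) :
  all (sorted leq) T -> all (sorted leq) (tab_ins x T).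
Proof.
elim: T x => [|r T IH] x //= /andP[Hr HT].
have := row_ins_sorted x Hr.
by case: (row_ins x r) => [[b|] r'] /= ->; rewrite ?IH.
Qed.

Lemma word_ins_cat (T : seq (seq nat)) (X Y : seq nat) :
  word_ins T (X ++ Y) = word_ins (word_ins T X) Y.
Proof. exact: foldl_cat. Qed.

Lemma word_ins_all (P : pred nat) (X : seq nat) (T : seq (seq nat)) :
  all P X -> all (all P) T -> all (all P) (word_ins T X).
Proof.
elim: X T => [//|a X IH] T /= /andP[Pa PX] HT.
by apply: IH => //; apply: tab_ins_all.
Qed.

Lemma word_ins_sorted (X : seq nat) (T : seq (seq nat)) :
  all (sorted leq) T -> all (sorted leq) (word_ins T X).
Proof. by elim: X T => [//|a X IH] T HT; apply: IH; apply: tab_ins_sorted. Qed.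

(* [cnt a S] is the number of letters of the row [S] that are [<= a]; in a
   weakly increasing row these form the prefix skipped when inserting [a],
   and the letter at position [cnt a S] (if any) is the one bumped. *)
Definition cnt (a : nat) (S : seq nat) : nat := count (fun y => y <= a) S.
Arguments cnt : simpl never.

Lemma take_cnt (a : nat) (S : seq nat) : sorted leq S ->
  take (cnt a S) S = filter (fun y => y <= a) S.
Proof. by move=> HS; rewrite {2}(sorted_split a HS) /cnt -size_filter take_size_cat. Qed.

Lemma drop_cnt (a : nat) (S : seq nat) : sorted leq S ->
  drop (cnt a S) S = filter (fun y => a < y) S.
Proof. by move=> HS; rewrite {2}(sorted_split a HS) /cnt -size_filter drop_size_cat. Qed.

Lemma take_cnt_le (a : nat) (S : seq nat) : sorted leq S ->
  all (fun y => y <= a) (take (cnt a S) S).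
Proof. by move=> HS; rewrite take_cnt // filter_all. Qed.

Lemma nth_cnt_gt (a : nat) (S : seq nat) : sorted leq S -> cnt a S < size S ->
  a < nth 0 S (cnt a S).
Proof.
move=> HS Hn; rewrite -[cnt a S]addn0 -nth_drop drop_cnt //.
have : nth 0 (filter (fun y => a < y) S) 0 \in filter (fun y => a < y) S.
  by rewrite mem_nth // -drop_cnt // size_drop subn_gt0.
by rewrite mem_filter => /andP[].
Qed.

Lemma row_ins_app (a : nat) (A S : seq nat) : all (fun y => y <= a) A ->
  row_ins a (A ++ S) = ((row_ins a S).1, A ++ (row_ins a S).2).
Proof.
elim: A => [|y A IH] /=; first by case: (row_ins a S).
by case/andP=> Hya /IH ->; rewrite ltnNge Hya; case: (row_ins a S).
Qed.

Lemma row_ins_sortedE (a : nat) (S : seq nat) : sorted leq S ->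
  row_ins a S = if cnt a S < size S then
     (Some (nth 0 S (cnt a S)), take (cnt a S) S ++ a :: drop (cnt a S).+1 S)
  else (None, S ++ [:: a]).
Proof.
move=> HS; rewrite -{1}(cat_take_drop (cnt a S) S) row_ins_app ?take_cnt_le //.
case: ifP => Hn; last first.
  by rewrite drop_oversize ?take_oversize ?cats0 // leqNgt Hn.
by rewrite (drop_nth 0 Hn) /= nth_cnt_gt.
Qed.

Lemma cnt_lt_size (a : nat) (S : seq nat) :
  (cnt a S < size S) = has (fun y => a < y) S.
Proof.
rewrite /cnt -(count_predC (fun y => y <= a)) -{1}[count _ S]addn0 ltn_add2l.
by rewrite has_count; congr (0 < _); apply: eq_count => y /=; rewrite ltnNge.
Qed.

(* Inserting a weakly increasing word [X] into a weakly increasing row [S]: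
   each letter [a] of [X] keeps the [cnt a S] letters of [S] that are [<= a],
   bumps the next letter (if any), and the remaining letters of [X], all
   [>= a], then act on what lies beyond the bumped letter.  [ins_front S X]
   is the part of the new row built so far, [ins_bumps S X] the sequence of
   bumped letters, and [ins_reach S X] the number of letters of [S] passed. *)
Fixpoint ins_front (S X : seq nat) : seq nat :=
  if X is a :: X' then take (cnt a S) S ++ a :: ins_front (drop (cnt a S).+1 S) X'
  else [::].

Fixpoint ins_bumps (S X : seq nat) : seq nat :=
  if X is a :: X' then
    (if cnt a S < size S then [:: nth 0 S (cnt a S)] else [::])
      ++ ins_bumps (drop (cnt a S).+1 S) X'
  else [::].

Fixpoint ins_reach (S X : seq nat) : nat :=
  if X is a :: X' then (cnt a S).+1 + ins_reach (drop (cnt a S).+1 S) X' else 0.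

Lemma sorted_nth_drop (S : seq nat) (n : nat) : sorted leq S -> n < size S ->
  all (leq (nth 0 S n)) (drop n.+1 S).
Proof.
move=> HS Hn; have := HS; rewrite -{1}(cat_take_drop n.+1 S) sorted_leq_cat.
case/and3P=> /allrelP Hle _ _; apply/allP=> y Hy; apply: Hle => //.
by rewrite (take_nth 0 Hn) mem_rcons mem_head.
Qed.

Lemma tab_ins_two_rows (a : nat) (A S B : seq nat) :
  all (fun y => y <= a) A -> sorted leq S -> allrel leq B S ->
  tab_ins a [:: A ++ S; B] =
  [:: A ++ take (cnt a S) S ++ a :: drop (cnt a S).+1 S;
      B ++ (if cnt a S < size S then [:: nth 0 S (cnt a S)] else [::])].
Proof.
move=> HA HS HB; rewrite /= row_ins_app // row_ins_sortedE //.
have [Hn|Hn] /= := ltnP (cnt a S) (size S); last first.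
  by rewrite drop_oversize ?take_oversize ?cats0 // ltnW.
rewrite -[B]cats0 row_ins_app ?cats0 //; apply/allP=> y Hy.
by move/allrelP: HB; apply=> //; apply: mem_nth.
Qed.

Lemma word_ins_two_rows (X A S B : seq nat) :
  sorted leq S -> sorted leq X -> allrel leq A X -> allrel leq B S ->
  word_ins [:: A ++ S; B] X =
  [:: A ++ ins_front S X ++ drop (ins_reach S X) S; B ++ ins_bumps S X].
Proof.
elim: X A S B => [|a X IH] A S B HS HaX HA HB; first by rewrite /= drop0 !cats0.
have [HX Ha] := (path_sorted HaX, order_path_min leq_trans HaX).
move: HA; rewrite allrel_consr => /andP[HAa HAX].
have -> : word_ins [:: A ++ S; B] (a :: X) = word_ins (tab_ins a [:: A ++ S; B]) X
  by [].
rewrite tab_ins_two_rows //=.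
set n := cnt a S; set bump := (if n < size S then _ else _).
have -> : A ++ take n S ++ a :: drop n.+1 S = (A ++ take n S ++ [:: a]) ++ drop n.+1 S.
  by rewrite -!catA.
rewrite IH ?drop_sorted //.
- by rewrite drop_drop addnC -!catA.
- rewrite !allrel_catl HAX allrel1l Ha andbT /=.
  apply/allrelP=> y x /(allP (take_cnt_le a HS)) /= Hya /(allP Ha) /=.
  exact: leq_trans.
- rewrite allrel_catl; apply/andP; split.
    by apply/allrelP=> y x Hy /mem_drop Hx; apply: (allrelP HB).
  by rewrite /bump; case: ifP => Hn //=; rewrite allrel1l sorted_nth_drop.
Qed.

Lemma word_ins_one_row (a : nat) (X R : seq nat) : sorted leq R -> cnt a R < size R ->
  word_ins [:: R] (a :: X) = word_ins [:: R; [::]] (a :: X).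
Proof. by move=> HR Hn; rewrite /word_ins /= row_ins_sortedE // Hn. Qed.

Lemma ins_front_nil (X : seq nat) : ins_front [::] X = X.
Proof. by elim: X => //= a X ->. Qed.

Lemma ins_bumps_nil (X : seq nat) : ins_bumps [::] X = [::].
Proof. by elim: X. Qed.

(* If every letter of [X] stays below the letter of [S] in the same position
   and [X] is at least as long, each letter of [X] bumps the first remaining
   letter of [S]: the whole of [S] is bumped and replaced by [X]. *)
Lemma ins_dominated (X S : seq nat) : sorted leq S ->
  (forall t, t < size S -> t < size X -> nth 0 X t < nth 0 S t) ->
  size S <= size X ->
  [/\ ins_front S X = X, ins_bumps S X = S & size S <= ins_reach S X].
Proof.
elim: X S => [|a X IH] [|b S] //= HbS Hdom Hsz.
  by rewrite ins_front_nil ins_bumps_nil.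
have Hab : a < b by apply: (Hdom 0).
have Hcnt : cnt a (b :: S) = 0.
  rewrite /cnt /= leqNgt Hab /=; apply/eqP; rewrite eqn0Ngt -has_count.
  by apply/hasP=> -[z /(allP (order_path_min leq_trans HbS)) /= Hbz Hza]; lia.
rewrite Hcnt /= drop0.
have [-> -> HS] := IH S (path_sorted HbS) (fun t => Hdom t.+1) Hsz.
by split; rewrite // addSn ltnS leq_addl ?(leq_trans HS).
Qed.

Lemma ins_reach_ge (X S : seq nat) : size X <= ins_reach S X.
Proof.
by elim: X S => //= a X IH S; rewrite addSn ltnS; apply: leq_trans (IH _) (leq_addl _ _).
Qed.

Lemma ins_reach_bound (X S : seq nat) (l : nat) : l < size X ->
  cnt (nth 0 X l) S + (size X - l) <= ins_reach S X.
Proof.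
elim: X S l => [//|a X IH] S [|l] /= Hl.
  by rewrite subn0 addnS addSn ltnS leq_add2l ins_reach_ge.
have := IH (drop (cnt a S).+1 S) l Hl.
have : cnt (nth 0 X l) S <= (cnt a S).+1 + cnt (nth 0 X l) (drop (cnt a S).+1 S).
  rewrite /cnt -{1}(cat_take_drop (cnt a S).+1 S) count_cat leq_add2r.
  by rewrite (leq_trans (count_size _ _)) // size_take; case: ltnP.
lia.
Qed.

Lemma ins_front_le (H : nat) (X S : seq nat) : sorted leq S ->
  all (fun x => x <= H) X -> all (fun x => x <= H) (ins_front S X).
Proof.
elim: X S => [//|a X IH] S HS /= /andP[Ha HX].
rewrite all_cat /= Ha IH ?drop_sorted // !andbT.
by apply/allP=> y /(allP (take_cnt_le a HS)) /= Hya; apply: leq_trans Ha.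
Qed.

Lemma ins_bumps_mem (X S : seq nat) (x : nat) :
  x \in ins_bumps S X -> x \in take (ins_reach S X) S.
Proof.
elim: X S => [//|a X IH] S /=.
rewrite takeD !mem_cat => /orP[|/IH ->]; last by rewrite orbT.
case: ifP => // Hn; rewrite inE => /eqP->.
by rewrite (take_nth 0 Hn) mem_rcons mem_head.
Qed.

Lemma ins_bumps_above (H : nat) (X S : seq nat) : sorted leq S ->
  all (fun x => x <= H) X ->
  filter (fun x => H < x) (ins_bumps S X) =
  filter (fun x => H < x) (take (ins_reach S X) S).
Proof.
elim: X S => [|a X IH] S HS /=; first by rewrite take0.
case/andP=> Ha HX; rewrite takeD !filter_cat IH ?drop_sorted //; congr (_ ++ _).
have Hfront : filter (fun x => H < x) (take (cnt a S) S) = [::].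
  apply/eqP; rewrite -(negbK (_ == _)) -has_filter; apply/hasP=> -[z Hz].
  by have := allP (take_cnt_le a HS) z Hz => /= Hza; rewrite ltnNge (leq_trans Hza).
case: ifP => Hn.
  by rewrite (take_nth 0 Hn) -cats1 filter_cat Hfront /=; case: ifP.
have Hsize : size S <= cnt a S by rewrite leqNgt Hn.
by rewrite take_oversize ?(leq_trans Hsize) // -(take_oversize Hsize) Hfront.
Qed.

Lemma powkS (m k : nat) (y : seq nat) :
  powk m k.+1 y = y ++ powk m k (shiftw m y).
Proof.
rewrite /powk -addn1 addnC iotaD /= add0n.
have -> : shiftw 0 y = y by rewrite /shiftw (eq_map addn0) map_id.
have -> : iota 1 k = map (addn 1) (iota 0 k) by rewrite -iotaDl.
congr (_ ++ _); rewrite -map_comp; congr flatten.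
apply: eq_map => j /=; rewrite /shiftw -map_comp; apply: eq_map => z /=.
by rewrite mulnDl mul1n addnA.
Qed.

Lemma size_shiftw (m : nat) (y : seq nat) : size (shiftw m y) = size y.
Proof. exact: size_map. Qed.

Lemma size_powk (m k : nat) (y : seq nat) : size (powk m k y) = k * size y.
Proof. by elim: k y => [//|k IH] y; rewrite powkS size_cat IH size_shiftw mulSn. Qed.

Lemma nth_powk (m k : nat) (y : seq nat) (j p : nat) : p < size y -> j < k ->
  nth 0 (powk m k y) (j * size y + p) = nth 0 y p + j * m.
Proof.
elim: k y j => [//|k IH] y [|j] Hp Hj.
  by rewrite powkS mul0n add0n nth_cat Hp addn0.
rewrite powkS nth_cat mulSn -addnA ltnNge leq_addr /= addKn.
rewrite -(size_shiftw m y) IH ?size_shiftw // /shiftw (nth_map 0) //.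
by rewrite mulSn addnA.
Qed.

Lemma mem_powk (m k : nat) (y : seq nat) (x : nat) : x \in powk m k y ->
  exists j z, [/\ j < k, z \in y & x = z + j * m].
Proof.
elim: k y => [//|k IH] y; rewrite powkS mem_cat => /orP[Hx|].
  by exists 0, x; rewrite Hx addn0.
move/IH=> [j [z [Hj /mapP [z' Hz' ->] ->]]].
by exists j.+1, z'; rewrite mulSn addnA.
Qed.

Lemma sorted_powk (m k b : nat) (y : seq nat) :
  {in y, forall z, b < z <= b + m} -> sorted leq y -> sorted leq (powk m k y).
Proof.
elim: k b y => [//|k IH] b y Hy Hs.
have Hy' : {in shiftw m y, forall z, b + m < z <= b + m + m}.
  by move=> z /mapP [z' /Hy Hz' ->]; rewrite !ltn_add2r !leq_add2r.
have Hs' : sorted leq (shiftw m y).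
  by rewrite /shiftw sorted_map; apply: sub_sorted Hs => a c /=; rewrite leq_add2r.
rewrite powkS sorted_leq_cat Hs (IH (b + m) _ Hy' Hs') !andbT.
apply/allrelP=> a x /Hy Ha /mem_powk [j [z [_ /Hy' Hz ->]]]; lia.
Qed.

Section TwoRowInsertion.

(* The setting of the theorem with [L = (i-1)m], [H = im = L + m] and
   [k = n + 2]: [u], [v] have letters in [(L, H]], [w], [w'] in [[1, L]]. *)
Variables (L m n : nat) (u v w w' : seq nat).
Hypothesis u_win : {in u, forall z, L < z <= L + m}.
Hypothesis v_win : {in v, forall z, L < z <= L + m}.
Hypothesis w_low : {in w, forall z, 0 < z <= L}.
Hypothesis w'_low : {in w', forall z, 0 < z <= L}.
Hypotheses (u_sorted : sorted leq u) (v_sorted : sorted leq v).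
Hypotheses (w_sorted : sorted leq w) (w'_sorted : sorted leq w').
Hypotheses (u_nonempty : 0 < size u) (uv_size : size u <= size v).

Local Notation H := (L + m).
Local Notation R := (w ++ powk m n.+2 u).
Local Notation X := (w' ++ v).
Local Notation W := (powk m n.+1 (shiftw m v)).
Local Notation c := (ins_reach R X).

Lemma row_sorted : sorted leq R.
Proof.
rewrite sorted_leq_cat w_sorted (sorted_powk _ u_win u_sorted) !andbT.
apply/allrelP=> y x /w_low Hy /mem_powk [j [z [_ /u_win Hz ->]]]; lia.
Qed.

Lemma X_sorted : sorted leq X.
Proof.
rewrite sorted_leq_cat w'_sorted v_sorted !andbT.
by apply/allrelP=> y x /w'_low Hy /v_win Hx; lia.
Qed.

Lemma X_low : {in X, forall x, 0 < x <= H}.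
Proof. by move=> x; rewrite mem_cat => /orP[/w'_low|/v_win]; lia. Qed.

Lemma X_le : all (fun x => x <= H) X.
Proof. by apply/allP=> x /X_low /andP[]. Qed.

Lemma shift_v_win : {in shiftw m v, forall z, H < z <= H + m}.
Proof. by move=> z /mapP [z' /v_win Hz' ->]; lia. Qed.

Lemma W_sorted : sorted leq W.
Proof.
apply: sorted_powk shift_v_win _.
by rewrite /shiftw sorted_map; apply: sub_sorted v_sorted => a b /=; rewrite leq_add2r.
Qed.

Lemma W_high : {in W, forall x, H < x}.
Proof. by move=> x /mem_powk [j [z [_ /shift_v_win Hz ->]]]; lia. Qed.

(* The first letter of [X] bumps (the block [u+m] of [R] lies above [H]), so
   [X] produces a second row made of its bumped letters. *)
Lemma insert_low_part :
  word_ins [:: R] X = [:: ins_front R X ++ drop c R; ins_bumps R X].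
Proof.
have := @word_ins_two_rows X [::] R [::] row_sorted X_sorted (allrel0l _ _) (allrel0l _ _).
rewrite !cat0s => <-.
have : 0 < size X by rewrite size_cat (leq_trans u_nonempty) // (leq_trans uv_size) ?leq_addl.
have Xa_low := X_low; case: (w' ++ v) Xa_low => [//|a X'] Xa_low _.
rewrite word_ins_one_row ?row_sorted // cnt_lt_size; apply/hasP.
have Hu0 : L < nth 0 u 0 <= H := u_win (mem_nth 0 u_nonempty).
have Ha := Xa_low a (mem_head _ _).
exists (nth 0 u 0 + m); last by rewrite /=; lia.
by rewrite mem_cat powkS mem_cat powkS mem_cat (map_f (addn^~ m)) ?mem_nth ?orbT.
Qed.

Lemma cnt_row_ge (a : nat) : L <= a -> size w + cnt a u <= cnt a R.
Proof.
move=> HLa; rewrite /cnt count_cat powkS count_cat addnA.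
have -> : count (fun y => y <= a) w = size w.
  by apply/eqP; rewrite -all_count; apply/allP=> z /w_low /=; lia.
exact: leq_addr.
Qed.

Lemma reach_ge (l : nat) : l < size v ->
  size w + cnt (nth 0 v l) u + (size v - l) <= c.
Proof.
move=> Hl; have Hl' : size w' + l < size X by rewrite size_cat ltn_add2l.
have := ins_reach_bound R Hl'; rewrite nth_cat ltnNge leq_addr /= addKn.
rewrite size_cat subnDl; apply: leq_trans; rewrite leq_add2r cnt_row_ge //.
by have : L < nth 0 v l <= H := v_win (mem_nth 0 Hl); lia.
Qed.

(* The entry of [R] at position [size w + cnt v_l u + (j+1) size u] is
   the first one exceeding [v_l + (j+1) m]: it is [u_p + (j+1)m] with
   [u_p > v_l], or [u_0 + (j+2) m] when all of [u] is [<= v_l]. *)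
Lemma row_entry_above (l j : nat) : l < size v ->
  size w + cnt (nth 0 v l) u + j.+1 * size u < size R ->
  nth 0 v l + j.+1 * m < nth 0 R (size w + cnt (nth 0 v l) u + j.+1 * size u).
Proof.
move=> Hl; set cu := cnt (nth 0 v l) u; set r := size u.
have Hvl : L < nth 0 v l <= H := v_win (mem_nth 0 Hl).
have Hcu : cu <= r by apply: count_size.
rewrite size_cat size_powk -/r -!addnA ltn_add2l => Hsz.
rewrite nth_cat (leq_gtF (leq_addr _ _)) addKn.
have [Hcur|Hcur] := ltnP cu r.
  have Hj : j.+1 < n.+2 by rewrite -(ltn_pmul2r u_nonempty); lia.
  rewrite [cu + _]addnC /r nth_powk //.
  by have := nth_cnt_gt u_sorted Hcur; rewrite -/cu; lia.
have Hcu_r : cu = r by apply/eqP; rewrite eqn_leq Hcu.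
have Hj : j.+2 < n.+2.
  by rewrite -(ltn_pmul2r u_nonempty) -/r mulSn -{1}Hcu_r.
rewrite Hcu_r -mulSn -[_ * r]addn0 /r nth_powk //.
by have : L < nth 0 u 0 <= H := u_win (mem_nth 0 u_nonempty); rewrite mulSn; lia.
Qed.

Lemma rest_dominated :
  size (drop c R) <= size W /\
  (forall t, t < size (drop c R) -> t < size W -> nth 0 W t < nth 0 (drop c R) t).
Proof.
have Hs : 0 < size v := leq_trans u_nonempty uv_size.
have HsW : size W = n.+1 * size v by rewrite size_powk size_shiftw.
have HsR : size R = size w + n.+2 * size u by rewrite size_cat size_powk.
split.
  have := reach_ge Hs; have := leq_mul (leqnn n.+2) uv_size.
  rewrite size_drop HsW HsR !mulSn; lia.
move=> t; rewrite size_drop HsW HsR => Ht Ht'.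
pose j := t %/ size v; pose l := t %% size v.
have Htjl : t = j * size v + l by apply: divn_eq.
have Hl : l < size v by rewrite ltn_mod.
have Hj : j < n.+1 by rewrite ltn_divLR.
rewrite nth_drop {1}Htjl -[in j * size v](size_shiftw m v) nth_powk ?size_shiftw //.
rewrite /shiftw (nth_map 0) // -addnA -mulSn.
set q := size w + cnt (nth 0 v l) u + j.+1 * size u.
have Hq : q <= c + t.
  have := reach_ge Hl; have := leq_mul (leqnn j.+1) uv_size; rewrite /q !mulSn; lia.
have HqR : q < size R by rewrite HsR; lia.
apply: leq_trans (row_entry_above Hl HqR) _.
apply: (sorted_leq_nth leq_trans leqnn 0 row_sorted) => //.
by rewrite inE /= HsR; lia.
Qed.

(* After [X], the letters of [W] each bump the first remaining letter of [R]:
   the first row ends with [W], the second row with the rest of [R]. *)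
Lemma insert_whole_word :
  word_ins [:: R] (X ++ W) =
  [:: ins_front R X ++ W; ins_bumps R X ++ drop c R].
Proof.
have Hfront : allrel leq (ins_front R X) W.
  apply/allrelP=> y x /(allP (ins_front_le row_sorted X_le)) Hy /W_high Hx.
  exact: ltnW (leq_ltn_trans Hy Hx).
have Hbumps : allrel leq (ins_bumps R X) (drop c R).
  apply/allrelP=> y x /ins_bumps_mem Hy Hx.
  by move: row_sorted; rewrite -{1}(cat_take_drop c R) sorted_leq_cat => /and3P[/allrelP->].
have [Hdom_size Hdom] := rest_dominated.
rewrite word_ins_cat insert_low_part word_ins_two_rows ?(drop_sorted _ row_sorted) ?W_sorted //.
have [-> -> Hreach] := ins_dominated (drop_sorted c row_sorted) Hdom Hdom_size.
by rewrite (drop_oversize Hreach) cats0.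
Qed.

(* The letters of the second row above [H] are exactly those of
   [(u+m)^(k-1)]: they are the letters of [R] above [H]. *)
Lemma second_row_high :
  filter (fun x => H < x) (ins_bumps R X ++ drop c R) = powk m n.+1 (shiftw m u).
Proof.
rewrite filter_cat (ins_bumps_above row_sorted X_le) -filter_cat cat_take_drop.
rewrite filter_cat powkS filter_cat.
have Fw : filter (fun x => H < x) w = [::].
  by rewrite (@eq_in_filter _ _ pred0) ?filter_pred0 // => z /w_low Hz /=; lia.
have Fu : filter (fun x => H < x) u = [::].
  by rewrite (@eq_in_filter _ _ pred0) ?filter_pred0 // => z /u_win Hz /=; lia.
rewrite Fw Fu.
apply/all_filterP/allP=> x /mem_powk [j [z [_ Hz ->]]].
by move: Hz => /mapP [z' /u_win Hz' ->]; lia.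
Qed.

Lemma insertion_two_rows : exists x x' : seq nat,
  [/\ sorted leq x, letters_in 1 H x, sorted leq x', letters_in 1 H x' &
      word_ins [:: R] (w' ++ powk m n.+2 v) =
        [:: x ++ W; x' ++ powk m n.+1 (shiftw m u)]].
Proof.
set row1 := ins_front R X ++ W; set row2 := ins_bumps R X ++ drop c R.
have E : word_ins [:: R] (w' ++ powk m n.+2 v) = [:: row1; row2].
  by rewrite [powk m n.+2 v]powkS catA insert_whole_word.
have /and3P[/cat_sorted2[Hx _] Hrow2 _] : all (sorted leq) [:: row1; row2].
  by rewrite -E word_ins_sorted //= row_sorted.
have /and3P[Hpos1 Hpos2 _] : all (all (fun z => 0 < z)) [:: row1; row2].
  rewrite -E; apply: word_ins_all; rewrite /= ?andbT all_cat; apply/andP; split.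
  - by apply/allP=> z /w'_low /andP[].
  - by apply/allP=> z /mem_powk [j [y [_ /v_win Hy ->]]]; lia.
  - by apply/allP=> z /w_low /andP[].
  - by apply/allP=> z /mem_powk [j [y [_ /u_win Hy ->]]]; lia.
exists (ins_front R X), (filter (fun z => z <= H) row2); split.
- exact: Hx.
- apply/allP=> z Hz; rewrite (allP (ins_front_le row_sorted X_le) z Hz) andbT.
  by move: Hpos1; rewrite all_cat => /andP[/allP /(_ z Hz)].
- exact: sorted_filter leq_trans _ _ Hrow2.
- apply/allP=> z; rewrite mem_filter => /andP[Hz /(allP Hpos2) /= Hpos].
  by rewrite Hz Hpos.
by rewrite E -second_row_high -sorted_split.
Qed.

End TwoRowInsertion.

Theorem mainTheorem8 (i m : nat) (u v w w' : seq nat) (k : nat) :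
  1 <= i -> 1 <= m ->
  sorted ltn u -> letters_in ((i - 1) * m + 1) (i * m) u ->
  sorted ltn v -> letters_in ((i - 1) * m + 1) (i * m) v ->
  0 < size u -> size u <= size v ->
  sorted ltn w -> letters_in 1 ((i - 1) * m) w ->
  sorted ltn w' -> letters_in 1 ((i - 1) * m) w' ->
  2 <= k ->
  exists x x' : seq nat,
    [/\ sorted leq x, letters_in 1 (i * m) x,
        sorted leq x', letters_in 1 (i * m) x' &
        word_ins [:: w ++ powk m k u] (w' ++ powk m k v) =
          [:: x ++ powk m (k - 1) (shiftw m v);
              x' ++ powk m (k - 1) (shiftw m u)]].
Proof.
move=> i_ge1 _ su lu sv lv u_nonempty uv_size sw lw sw' lw' k_ge2.
have HiL : i * m = (i - 1) * m + m by rewrite -mulSnr subn1 prednK.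
rewrite HiL in lu lv *; set L := (i - 1) * m in lu lv lw lw' *.
have window (y : seq nat) :
  letters_in (L + 1) (L + m) y -> {in y, forall z, L < z <= L + m}.
  by move=> /allP Hy z /Hy; rewrite addn1.
have weaken (y : seq nat) : sorted ltn y -> sorted leq y.
  by apply: sub_sorted => a b /ltnW.
case: k k_ge2 => [|[|n]] // _; rewrite subSS subn0.
apply: (insertion_two_rows n (window _ lu) (window _ lv) (allP lw) (allP lw'));
  by rewrite ?weaken.
Qed.
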